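(* Let $G\neq K_n$ be a simple graph with $n$ vertices and maximum degree $\Delta$. (i) If $0\leq \alpha< \frac{1}{\Delta+1}$, then $S_k(A_{\alpha}(G))\leq \frac{(1-\alpha)n}{2}(1+\sqrt{k})$ for every $2\leq k\leq n$. (ii) If $\frac{1}{\Delta+1}\leq \alpha< 1$, then $S_k(A_{\alpha}(G))\leq \frac{\alpha \Delta n}{2}(1+\sqrt{k})$ for every $2\leq k\leq n$.
   Context: All graphs are simple and undirected. For a graph $G$ with adjacency matrix $A(G)$ and diagonal degree matrix $D(G)$, and a real $\alpha\in[0,1]$, $A_{\alpha}(G)=\alpha D(G)+(1-\alpha)A(G)$. For a real symmetric $n\times n$ matrix $M$ with eigenvalues $\lambda_1(M)\geq\cdots\geq\lambda_n(M)$, $S_k(M)=\sum_{i=1}^k\lambda_i(M)$. $K_n$ is the complete graph on $n$ vertices. *)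

From HB Require Import structures.
From mathcomp Require Import all_boot all_order all_algebra.
Set Implicit Arguments. Unset Strict Implicit. Unset Printing Implicit Defensive.
Import Order.TTheory GRing.Theory Num.Theory.
Local Open Scope ring_scope.

Definition simple_graph (n : nat) (e : rel 'I_n) : Prop :=
  (forall i, ~~ e i i) /\ (forall i j, e i j = e j i).

Definition is_complete (n : nat) (e : rel 'I_n) : Prop :=
  forall i j : 'I_n, i != j -> e i j.

Definition deg (n : nat) (e : rel 'I_n) (i : 'I_n) : nat := #|[set j | e i j]|.

Definition max_deg (n : nat) (e : rel 'I_n) : nat := (\max_(i < n) deg e i)%N.

Definition adjmx (R : nzRingType) (n : nat) (e : rel 'I_n) : 'M[R]_n :=
  \matrix_(i, j) (e i j)%:R.

Definition degmx (R : nzRingType) (n : nat) (e : rel 'I_n) : 'M[R]_n :=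
  \matrix_(i, j) ((i == j)%:R * (deg e i)%:R).

Definition Aalpha (R : nzRingType) (n : nat) (e : rel 'I_n) (alpha : R) : 'M[R]_n :=
  alpha *: degmx R e + (1 - alpha) *: adjmx R e.

(* s is the list of eigenvalues of M (with multiplicity) in non-increasing
   order: lambda_1 >= ... >= lambda_n, i.e. s`_(i-1) = lambda_i. *)
Definition eigen_seq (R : realDomainType) (n : nat) (M : 'M[R]_n) (s : seq R) : Prop :=
  sorted (fun x y => y <= x) s /\ char_poly M = \prod_(x <- s) ('X - x%:P).

Definition Ssum (R : nmodType) (k : nat) (s : seq R) : R := \sum_(i < k) s`_i.

(* Diagonalise the real symmetric matrix A = A_alpha(G) by a unitary matrix P
   over R[i]: the i-th eigenvalue is \sum_(j,l) a_jl w_ijl with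
   w_ijl = Re (P_ij * conj P_il).  For a set I of k rows let
   W_jl = \sum_(i in I) w_ijl.  Each row contributes |\sum_j P_ij|^2 >= 0 to
   \sum_(j,l) W_jl and all rows together contribute n, so \sum W_jl <= n;
   expanding the squares and using orthonormality of the rows gives
   \sum W_jl^2 <= k.  The entries of A lie in [0, b] with
   b = max (1 - alpha) (alpha Delta); centring them at b/2 and applying
   Cauchy-Schwarz to the centred part bounds the sum of the k eigenvalues by
   b/2 (n + n sqrt k).  In case (i) b = 1 - alpha, in case (ii) b = alpha Delta. *)

From HB Require Import structures.
From mathcomp Require Import all_boot all_order all_algebra.
From mathcomp Require Import complex sesquilinear spectral.
From mathcomp Require Import ring lra.
Set Implicit Arguments.
Unset Strict Implicit.
Unset Printing Implicit Defensive.

Import Order.TTheory GRing.Theory Num.Theory.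
Local Open Scope ring_scope.

Section RealSums.
Variables (R : rcfType) (T : finType).

Lemma sum_mul_le_sqrt (x y : T -> R) :
  \sum_t x t * y t <= Num.sqrt (\sum_t x t ^+ 2) * Num.sqrt (\sum_t y t ^+ 2).
Proof.
set X := \sum_t x t ^+ 2; set Y := \sum_t y t ^+ 2; set S := \sum_t x t * y t.
have lagrange : \sum_t \sum_u (x t * y u - x u * y t) ^+ 2 = (X * Y - S ^+ 2) *+ 2.
  have E t u : (x t * y u - x u * y t) ^+ 2 =
      x t ^+ 2 * y u ^+ 2 + x u ^+ 2 * y t ^+ 2 - (x t * y t) * (x u * y u) *+ 2.
    by ring.
  under eq_bigr do under eq_bigr do rewrite E.
  under eq_bigr do rewrite sumrB big_split /= sumrMnl.
  rewrite sumrB big_split /= sumrMnl [X in _ + X - _]exchange_big /=.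
  by rewrite -!big_distrlr /= -/X -/Y -/S mulrC mulrnBl -mulr2n expr2.
have : S ^+ 2 <= X * Y.
  rewrite -subr_ge0 -(pmulrn_lge0 _ (isT : (0 < 2)%N)) -lagrange.
  by do 2!(apply: sumr_ge0 => ? _); rewrite sqr_ge0.
rewrite -sqrtrM ?sumr_ge0 // => [le_SXY|t _]; last exact: sqr_ge0.
apply: le_trans (ler_wsqrtr le_SXY); rewrite sqrtr_sqr; exact: ler_norm.
Qed.

Lemma sum_bounded_mul_le (a w : T -> R) (b N K : R) :
  0 <= b -> (forall t, 0 <= a t <= b) ->
  \sum_t w t <= N -> \sum_t w t ^+ 2 <= K ->
  \sum_t a t * w t <= b / 2 * (N + Num.sqrt (#|T|%:R * K)).
Proof.
move=> b_ge0 a_bnd sw_le sw2_le; set c := b / 2.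
have c_ge0 : 0 <= c by rewrite divr_ge0.
have centered t : (a t - c) ^+ 2 <= c ^+ 2.
  have /andP[a_ge0 a_le] := a_bnd t.
  rewrite -subr_ge0 subr_sqr mulr_ge0 //; rewrite /c; lra.
have -> : \sum_t a t * w t = c * \sum_t w t + \sum_t (a t - c) * w t.
  rewrite mulr_sumr -big_split; by apply: eq_bigr => t _ /=; ring.
rewrite mulrDr lerD ?ler_wpM2l //.
apply: le_trans (sum_mul_le_sqrt _ _) _.
have sa_le : \sum_t (a t - c) ^+ 2 <= #|T|%:R * c ^+ 2.
  apply: le_trans (ler_sum _ (fun t _ => centered t)) _.
  by rewrite sumr_const mulr_natl.
have -> : c * Num.sqrt (#|T|%:R * K) = Num.sqrt (#|T|%:R * c ^+ 2) * Num.sqrt K.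
  have sqrt_nc : Num.sqrt (#|T|%:R * c ^+ 2) = Num.sqrt #|T|%:R * c.
    by rewrite sqrtrM ?ler0n // sqrtr_sqr ger0_norm.
  by rewrite sqrt_nc sqrtrM ?ler0n // mulrCA mulrA.
by apply: ler_pM; rewrite ?sqrtr_ge0 ?ler_wsqrtr.
Qed.

End RealSums.

Lemma perm_eq_map_ex (T U : eqType) (f : T -> U) (s : seq U) (t : seq T) :
  perm_eq s (map f t) -> exists2 r, perm_eq r t & s = map f r.
Proof.
elim: s t => [|x s IHs] t pst.
  exists [::] => //; move/perm_size: pst; rewrite size_map.
  by case: t.
have /mapP[y yt def_x] : x \in map f t by rewrite -(perm_mem pst) mem_head.
have ty : perm_eq t (y :: rem y t) by rewrite perm_to_rem.
move: pst; rewrite def_x (permPr (perm_map f ty)) /= perm_cons => /IHs[r pr ->].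
by exists (y :: r); rewrite // (permPr ty) perm_cons.
Qed.

Lemma sum_take_perm (T : finType) (V : nmodType) (f : T -> V) (s : seq V) k :
  perm_eq s [seq f i | i <- enum T] -> (k <= size s)%N ->
  exists2 I : {set T}, #|I| = k & \sum_(i < k) s`_i = \sum_(i in I) f i.
Proof.
case/perm_eq_map_ex=> r /perm_uniq; rewrite enum_uniq => r_uniq -> {s}.
rewrite size_map => k_le.
have rk_uniq : uniq (take k r) by rewrite take_uniq.
exists [set x in take k r].
  by rewrite cardsE (card_uniqP rk_uniq) size_takel.
rewrite (eq_bigl [in take k r]) => [|i]; last by rewrite inE.
rewrite -big_uniq // -(big_map f xpredT id) map_take (big_nth 0).
rewrite size_takel ?size_map //.
by rewrite big_mkord; apply: eq_bigr => i _; rewrite nth_take.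
Qed.

Section UnitaryWeights.
Variable R : rcfType.
Local Notation C := R[i].
Local Notation Re := (@complex.Re R).

Lemma Re_sqr_le_mulcJ (x : C) : Re x ^+ 2 <= Re (x * x^*%C).
Proof. by case: x => a b /=; rewrite -expr2 mulrN opprK lerDl -expr2 sqr_ge0. Qed.

Lemma Re_mulcJ_ge0 (x : C) : 0 <= Re (x * x^*%C).
Proof. exact: le_trans (sqr_ge0 _) (Re_sqr_le_mulcJ x). Qed.

Lemma unitarymx_row_dot m n (M : 'M[C]_(m, n)) i i' : M \is unitarymx ->
  \sum_j M i j * (M i' j)^*%C = (i == i')%:R.
Proof.
move/unitarymxP/matrixP/(_ i i'); rewrite !mxE => <-.
by apply: eq_bigr => j _; rewrite !mxE.
Qed.

Lemma sum_sqr_normc_gram m n (M : 'M[C]_(m, n)) (I : {set 'I_m}) :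
  \sum_j \sum_l `|\sum_(i in I) M i j * (M i l)^*%C| ^+ 2 =
  \sum_(i in I) \sum_(i' in I) `|\sum_j M i j * (M i' j)^*%C| ^+ 2.
Proof.
under eq_bigr do under eq_bigr do rewrite sqr_normc rmorph_sum big_distrlr /=.
under [RHS]eq_bigr do under eq_bigr do rewrite sqr_normc rmorph_sum big_distrlr /=.
under eq_bigr do rewrite exchange_big /=.
rewrite exchange_big /=.
under eq_bigr do under eq_bigr do rewrite exchange_big /=.
under eq_bigr do rewrite exchange_big /=.
apply: eq_bigr => i _; apply: eq_bigr => i' _.
apply: eq_bigr => j _; apply: eq_bigr => l _.
by rewrite !rmorphM /= conjcK; ring.
Qed.

Lemma Re_natr k : Re k%:R = k%:R.
Proof. by rewrite -(rmorph_nat (real_complex R)). Qed.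

Lemma Re_realcM (a : R) (x : C) : Re (a%:C * x)%C = a * Re x.
Proof. by case: x => x1 x2 /=; rewrite mul0r subr0. Qed.

Definition unitary_weight n (P : 'M[C]_n) (i j l : 'I_n) : R :=
  Re (P i j * (P i l)^*%C).

Variables (n : nat) (P : 'M[C]_n).
Hypothesis P_unitary : P \is unitarymx.
Local Notation w := (unitary_weight P).

Lemma unitary_weight_row_ge0 i : 0 <= \sum_j \sum_l w i j l.
Proof.
have -> : \sum_j \sum_l w i j l = Re ((\sum_j P i j) * (\sum_l P i l)^*%C).
  rewrite rmorph_sum big_distrlr /= raddf_sum; apply: eq_bigr => j _.
  by rewrite raddf_sum.
exact: Re_mulcJ_ge0.
Qed.

Lemma sum_delta_ord j : \sum_(l < n) ((j == l)%:R : R) = 1.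
Proof.
rewrite (bigD1 j) //= eqxx big1 ?addr0 // => l.
by rewrite eq_sym => /negPf ->.
Qed.

Lemma unitary_weight_total : \sum_i \sum_j \sum_l w i j l = n%:R.
Proof.
have col_dot j l : \sum_i w i j l = (j == l)%:R.
  have := unitarymx_row_dot j l (etrans (trmx_unitary P) P_unitary).
  rewrite -Re_natr => <-; rewrite raddf_sum.
  by apply: eq_bigr => i _; rewrite !mxE.
rewrite exchange_big /=; under eq_bigr do rewrite exchange_big /=.
under eq_bigr do under eq_bigr do rewrite col_dot.
by under eq_bigr do rewrite sum_delta_ord; rewrite sumr_const card_ord.
Qed.

Variable I : {set 'I_n}.

Lemma unitary_weight_subset_le : \sum_(i in I) \sum_j \sum_l w i j l <= n%:R.
Proof.
rewrite -unitary_weight_total [leRHS](bigID [in I]) /= lerDl.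
by apply: sumr_ge0 => i _; apply: unitary_weight_row_ge0.
Qed.

Lemma unitary_weight_subset_sqr_le :
  \sum_j \sum_l (\sum_(i in I) w i j l) ^+ 2 <= #|I|%:R.
Proof.
have gram : \sum_j \sum_l `|\sum_(i in I) P i j * (P i l)^*%C| ^+ 2 = #|I|%:R.
  rewrite sum_sqr_normc_gram -sum1_card natr_sum; apply: eq_bigr => i iI.
  under eq_bigr do rewrite unitarymx_row_dot //.
  rewrite (bigD1 i) //= eqxx normr1 expr1n big1 ?addr0 // => i' /andP[_].
  by rewrite eq_sym => /negPf ->; rewrite normr0 expr0n.
rewrite -Re_natr -gram !raddf_sum; apply: ler_sum => j _.
rewrite raddf_sum; apply: ler_sum => l _.
by rewrite sqr_normc -raddf_sum Re_sqr_le_mulcJ.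
Qed.

End UnitaryWeights.

Lemma char_poly_similar (R : comUnitRingType) n (P A : 'M[R]_n) :
  P \in unitmx -> char_poly (invmx P *m A *m P) = char_poly A.
Proof.
move=> P_unit; rewrite /char_poly.
set Pi := map_mx polyC (invmx P); set Pp := map_mx polyC P.
have PiPp : Pi *m Pp = 1%:M by rewrite -map_mxM mulVmx // map_mx1.
have -> : char_poly_mx (invmx P *m A *m P) = Pi *m char_poly_mx A *m Pp.
  rewrite /char_poly_mx !map_mxM mulmxBr mulmxBl -/Pi -/Pp.
  by rewrite mul_mx_scalar -scalemxAl PiPp scalemx1.
by rewrite !det_mulmx mulrC mulrA -det_mulmx mulmx1C // det1 mul1r.
Qed.

Lemma symmetric_eigen_weights (R : rcfType) n (A : 'M[R]_n) (s : seq R) :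
  A^T = A -> char_poly A = \prod_(x <- s) ('X - x%:P) ->
  exists2 P : 'M[R[i]]_n, P \is unitarymx &
    perm_eq s [seq \sum_j \sum_l A j l * unitary_weight P i j l | i <- enum 'I_n].
Proof.
move=> A_sym A_char; set Ac := map_mx (real_complex R) A.
have Ac_herm : Ac \is hermsymmx.
  apply: realsym_hermsym.
    apply/is_hermitianmxP; rewrite expr0 scale1r; apply/matrixP => i j.
    by rewrite !mxE -[in LHS]A_sym mxE.
  by apply/mxOverP => i j; rewrite mxE /= complex_real.
have /orthomx_spectralP Ac_diag := hermitian_normalmx Ac_herm.
set P := spectralmx Ac in Ac_diag *; set d := spectral_diag Ac in Ac_diag *.
have P_unitary : P \is unitarymx := spectral_unitarymx Ac.
exists P => //.
have d_perm : perm_eq (map (real_complex R) s) [seq d 0 i | i <- enum 'I_n].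
  apply: prod_XsubC_eq; rewrite big_map.
  have -> : \prod_(x <- s) ('X - (x%:C)%C%:P) =
            map_poly (real_complex R) (char_poly A).
    by rewrite A_char rmorph_prod; apply: eq_bigr => x _; rewrite /= map_polyXsubC.
  rewrite map_char_poly -/Ac Ac_diag char_poly_similar ?unitarymx_unit //.
  rewrite char_poly_trig ?diag_mx_is_trig // big_map big_enum /=.
  by apply: eq_bigr => i _; rewrite mxE eqxx mulr1n.
have d_weights i :
    complex.Re (d 0 i) = \sum_j \sum_l A j l * unitary_weight P i j l.
  have : P *m Ac *m (P ^t*)%sesqui = diag_mx d.
    have PPt : P *m (P ^t*)%sesqui = 1%:M by apply/unitarymxP.
    rewrite [in LHS]Ac_diag invmx_unitary // !mulmxA PPt mul1mx.
    by rewrite -mulmxA PPt mulmx1.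
  move/matrixP/(_ i i); rewrite [in RHS]mxE eqxx mulr1n => <-.
  rewrite mxE raddf_sum [RHS]exchange_big /=; apply: eq_bigr => l _.
  rewrite mxE mulr_suml raddf_sum; apply: eq_bigr => j _.
  by rewrite !mxE mulrAC mulrC; apply: Re_realcM.
have toCK : cancel (real_complex R) (@complex.Re R) by [].
move/(perm_map (@complex.Re R)): d_perm; rewrite (mapK toCK) -map_comp.
by rewrite (eq_map d_weights).
Qed.

Lemma Ssum_le_entry_bound (R : rcfType) n (A : 'M[R]_n) (s : seq R) k (b : R) :
  A^T = A -> 0 <= b -> (forall j l, 0 <= A j l <= b) -> (k <= n)%N ->
  char_poly A = \prod_(x <- s) ('X - x%:P) ->
  Ssum k s <= b * n%:R / 2 * (1 + Num.sqrt k%:R).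
Proof.
move=> A_sym b_ge0 A_bnd k_le A_char.
have [P P_unitary s_perm] := symmetric_eigen_weights A_sym A_char.
rewrite /Ssum; have [|I card_I ->] := sum_take_perm (k := k) s_perm.
  by rewrite (perm_size s_perm) size_map size_enum_ord.
pose W j l := \sum_(i in I) unitary_weight P i j l.
have -> : \sum_(i in I) \sum_j \sum_l A j l * unitary_weight P i j l =
          \sum_p A p.1 p.2 * W p.1 p.2.
  under eq_bigr do rewrite pair_bigA /=.
  by rewrite exchange_big; apply: eq_bigr => p _; rewrite mulr_sumr.
have W_sum : \sum_p W p.1 p.2 <= n%:R.
  rewrite -pair_bigA /= /W; under eq_bigr do rewrite exchange_big /=.
  by rewrite exchange_big /= unitary_weight_subset_le.
have W_sqr : \sum_p W p.1 p.2 ^+ 2 <= k%:R.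
  rewrite -(pair_bigA _ (fun j l => W j l ^+ 2)) /= -card_I.
  exact: unitary_weight_subset_sqr_le.
have -> : b * n%:R / 2 * (1 + Num.sqrt k%:R) =
          b / 2 * (n%:R + Num.sqrt (#|{: 'I_n * 'I_n}|%:R * k%:R)).
  rewrite card_prod card_ord natrM !sqrtrM ?mulr_ge0 ?ler0n //.
  by rewrite -expr2 sqr_sqrtr ?ler0n //; ring.
exact: sum_bounded_mul_le b_ge0 (fun p => A_bnd p.1 p.2) W_sum W_sqr.
Qed.

Lemma Aalpha_sym (R : nzRingType) n (e : rel 'I_n) (alpha : R) :
  simple_graph e -> (Aalpha e alpha)^T = Aalpha e alpha.
Proof.
move=> [_ e_sym]; apply/matrixP => i j; rewrite !mxE [e j i]e_sym.
by case: (eqVneq i j) => [->|_] //; rewrite !mul0r.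
Qed.

Lemma Aalpha_entry_bound (R : realDomainType) n (e : rel 'I_n) (alpha : R) j l :
  simple_graph e -> 0 <= alpha <= 1 ->
  0 <= Aalpha e alpha j l <= Num.max (1 - alpha) (alpha * (max_deg e)%:R).
Proof.
move=> [e_irr _] /andP[alpha_ge0 alpha_le1].
have alpha'_ge0 : 0 <= 1 - alpha by rewrite subr_ge0.
rewrite !mxE; case: (eqVneq j l) => [<-|_].
  rewrite (negbTE (e_irr j)) mul1r mulr0 addr0 mulr_ge0 //= le_max.
  by rewrite ler_wpM2l ?orbT // ler_nat; apply: leq_bigmax.
rewrite mul0r mulr0 add0r.
by case: (e j l); rewrite ?mulr1 ?mulr0 le_max ?alpha'_ge0 ?lexx.
Qed.

Lemma Aalpha_Ssum_le (R : rcfType) n (e : rel 'I_n) (alpha : R) k s :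
  simple_graph e -> 0 <= alpha <= 1 -> (k <= n)%N ->
  eigen_seq (Aalpha e alpha) s ->
  Ssum k s <= Num.max (1 - alpha) (alpha * (max_deg e)%:R) * n%:R / 2 *
                (1 + Num.sqrt k%:R).
Proof.
move=> e_simple alpha01 k_le [_ A_char].
apply: Ssum_le_entry_bound (Aalpha_sym _ e_simple) _ _ k_le A_char.
  by case/andP: alpha01 => _ alpha_le1; rewrite le_max subr_ge0 alpha_le1.
by move=> j l; apply: Aalpha_entry_bound.
Qed.

Theorem theorem3p1 (R : rcfType) (n : nat) (e : rel 'I_n) (alpha : R) :
  simple_graph e -> ~ is_complete e ->
  (0 <= alpha -> alpha < ((max_deg e)%:R + 1)^-1 ->
     forall (k : nat) (s : seq R), (2 <= k <= n)%N ->
       eigen_seq (Aalpha e alpha) s ->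
       Ssum k s <= (1 - alpha) * n%:R / 2 * (1 + Num.sqrt k%:R))
  /\
  (((max_deg e)%:R + 1)^-1 <= alpha -> alpha < 1 ->
     forall (k : nat) (s : seq R), (2 <= k <= n)%N ->
       eigen_seq (Aalpha e alpha) s ->
       Ssum k s <= alpha * (max_deg e)%:R * n%:R / 2 * (1 + Num.sqrt k%:R)).
Proof.
(* The bound holds for complete graphs as well. *)
move=> e_simple _; set D := (max_deg e)%:R.
have D1_gt0 : 0 < D + 1 by rewrite ltr_wpDl ?ler0n.
split=> [alpha_ge0 alpha_lt k s /andP[_ k_le] |alpha_ge alpha_lt1 k s /andP[_ k_le]].
  have : alpha * (D + 1) < 1 by rewrite -ltr_pdivlMr // div1r.
  rewrite mulrDr mulr1 => lt1.
  have alphaD_le : alpha * D <= 1 - alpha by lra.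
  have alphaD_ge0 : 0 <= alpha * D by rewrite mulr_ge0 ?ler0n.
  rewrite -(max_l alphaD_le); apply: Aalpha_Ssum_le => //.
  apply/andP; split => //; lra.
have : 1 <= alpha * (D + 1) by rewrite -ler_pdivrMr // div1r.
rewrite mulrDr mulr1 => ge1.
have alpha_gt0 : 0 < alpha by apply: lt_le_trans alpha_ge; rewrite invr_gt0.
have alphaD_ge : 1 - alpha <= alpha * D by lra.
rewrite -(max_r alphaD_ge); apply: Aalpha_Ssum_le => //.
apply/andP; split; lra.
Qed.
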